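(* Let $\mathcal{A}$ be a complex Banach algebra with identity, $\lambda$ a nonzero complex number, and $M = \begin{pmatrix} A & B \\ C & D \end{pmatrix} \in M_2(\mathcal{A})$ with $A, D \in \mathcal{A}^d$. If $$AB = \lambda A^\pi B D,\quad DC = \lambda D^\pi C A,\quad BC = 0,$$ then $M \in M_2(\mathcal{A})^d$ and $$M^d = \begin{pmatrix} A^d & 0 \\ 0 & D^d \end{pmatrix} + \sum_{n=0}^{\infty} M^n \begin{pmatrix} 0 & B(D^d)^{n+2} \\ C(A^d)^{n+2} & 0 \end{pmatrix}.$$
   Context: $M_2(\mathcal{A})$ is the Banach algebra of $2\times 2$ matrices over $\mathcal{A}$. An element $x$ of a Banach algebra has a generalized Drazin (g-Drazin) inverse $x^d$ if $x^d$ commutes with $x$, $x^d = x^dxx^d$ and $x - x^2x^d$ is quasinilpotent (i.e. $\lim\|y^n\|^{1/n}=0$ for $y=x-x^2x^d$); $\mathcal{A}^d$ (resp. $M_2(\mathcal{A})^d$) denotes the set of g-Drazin invertible elements. The spectral idempotent is $x^\pi = 1 - xx^d$. $M^0$ is the identity matrix. *)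

From Stdlib Require Import Reals.
Open Scope R_scope.

Definition Cx : Type := (R * R)%type.
Definition C0 : Cx := (0, 0).
Definition C1 : Cx := (1, 0).
Definition Cadd (a b : Cx) : Cx := (fst a + fst b, snd a + snd b).
Definition Cmul (a b : Cx) : Cx :=
  (fst a * fst b - snd a * snd b, fst a * snd b + snd a * fst b).
Definition Cmod (a : Cx) : R := sqrt (fst a * fst a + snd a * snd a).

Record CBanachAlgebra := {
  car :> Type;
  zero : car;
  one : car;
  add : car -> car -> car;
  opp : car -> car;
  mul : car -> car -> car;
  scal : Cx -> car -> car;
  norm : car -> R;
  add_assoc : forall x y z, add x (add y z) = add (add x y) z;
  add_comm : forall x y, add x y = add y x;
  add_0l : forall x, add zero x = x;
  add_oppl : forall x, add (opp x) x = zero;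
  mul_assoc : forall x y z, mul x (mul y z) = mul (mul x y) z;
  mul_1l : forall x, mul one x = x;
  mul_1r : forall x, mul x one = x;
  mul_addl : forall x y z, mul (add x y) z = add (mul x z) (mul y z);
  mul_addr : forall x y z, mul x (add y z) = add (mul x y) (mul x z);
  scal_addl : forall a b x, scal (Cadd a b) x = add (scal a x) (scal b x);
  scal_addr : forall a x y, scal a (add x y) = add (scal a x) (scal a y);
  scal_mul : forall a b x, scal (Cmul a b) x = scal a (scal b x);
  scal_1 : forall x, scal C1 x = x;
  scal_mull : forall a x y, mul (scal a x) y = scal a (mul x y);
  scal_mulr : forall a x y, mul x (scal a y) = scal a (mul x y);
  norm_eq0 : forall x, norm x = 0 -> x = zero;
  norm_triangle : forall x y, norm (add x y) <= norm x + norm y;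
  norm_scal : forall a x, norm (scal a x) = Cmod a * norm x;
  norm_mul : forall x y, norm (mul x y) <= norm x * norm y;
  complete : forall u : nat -> car,
    (forall eps, eps > 0 -> exists N, forall m n, (m >= N)%nat -> (n >= N)%nat ->
        norm (add (u m) (opp (u n))) < eps) ->
    exists l, forall eps, eps > 0 -> exists N, forall n, (n >= N)%nat ->
        norm (add (u n) (opp l)) < eps
}.

Arguments zero {_}. Arguments one {_}. Arguments add {_}. Arguments opp {_}.
Arguments mul {_}. Arguments scal {_}. Arguments norm {_}.

Section Generic.
Variable T : Type.
Variables (gzero gone : T) (gadd : T -> T -> T) (gopp : T -> T)
          (gmul : T -> T -> T) (gnorm : T -> R).

Fixpoint gpow (x : T) (n : nat) : T :=
  match n with O => gone | S k => gmul x (gpow x k) end.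

(* lim ||y^n||^{1/n} = 0, i.e. for all eps > 0, eventually ||y^n|| <= eps^n *)
Definition gquasinil (y : T) : Prop :=
  forall eps, eps > 0 -> exists N, forall n, (n >= N)%nat ->
    gnorm (gpow y n) <= eps ^ n.

Definition gis_gdrazin (x z : T) : Prop :=
  gmul z x = gmul x z /\ z = gmul (gmul z x) z /\
  gquasinil (gadd x (gopp (gmul (gmul x x) z))).

Fixpoint gpsum (f : nat -> T) (n : nat) : T :=
  match n with O => f O | S k => gadd (gpsum f k) (f (S k)) end.

Definition gseries_sum (f : nat -> T) (S : T) : Prop :=
  forall eps, eps > 0 -> exists N, forall n, (n >= N)%nat ->
    gnorm (gadd (gpsum f n) (gopp S)) < eps.
End Generic.
Arguments gpow {T}. Arguments gquasinil {T}. Arguments gis_gdrazin {T}.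
Arguments gpsum {T}. Arguments gseries_sum {T}.

Section Alg.
Variable A : CBanachAlgebra.
Definition apow (x : A) (n : nat) : A := gpow one mul x n.
Definition is_gdrazin (x z : A) : Prop := gis_gdrazin one add opp mul norm x z.
Definition sub (x y : A) : A := add x (opp y).
Definition spidem (x xd : A) : A := sub one (mul x xd).

Record M2 := mk2 { m11 : A; m12 : A; m21 : A; m22 : A }.
Definition M2zero : M2 := mk2 zero zero zero zero.
Definition M2one : M2 := mk2 one zero zero one.
Definition M2add (M N : M2) : M2 :=
  mk2 (add (m11 M) (m11 N)) (add (m12 M) (m12 N))
      (add (m21 M) (m21 N)) (add (m22 M) (m22 N)).
Definition M2opp (M : M2) : M2 :=
  mk2 (opp (m11 M)) (opp (m12 M)) (opp (m21 M)) (opp (m22 M)).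
Definition M2mul (M N : M2) : M2 :=
  mk2 (add (mul (m11 M) (m11 N)) (mul (m12 M) (m21 N)))
      (add (mul (m11 M) (m12 N)) (mul (m12 M) (m22 N)))
      (add (mul (m21 M) (m11 N)) (mul (m22 M) (m21 N)))
      (add (mul (m21 M) (m12 N)) (mul (m22 M) (m22 N))).
(* a Banach algebra norm on M_2(A) (all such norms are equivalent) *)
Definition M2norm (M : M2) : R :=
  norm (m11 M) + norm (m12 M) + norm (m21 M) + norm (m22 M).

Definition M2pow (M : M2) (n : nat) : M2 := gpow M2one M2mul M n.
Definition M2is_gdrazin (M Z : M2) : Prop :=
  gis_gdrazin M2one M2add M2opp M2mul M2norm M Z.
Definition M2series_sum (f : nat -> M2) (S : M2) : Prop :=
  gseries_sum M2add M2opp M2norm f S.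
End Alg.

Arguments mk2 {_}.

From Pilot Require Import Defs.
From Stdlib Require Import Reals Lra Lia.
From Coquelicot Require Complex.
Open Scope R_scope.

(* From A B = lam A^pi B D one gets A^d B = 0, hence A^pi B = B and a B = lam B D for the
   quasinilpotent a = A - A^2 A^d.  Iterating, lam^k (B D^d) = a^k B (D^d)^(k+1), whose norm
   decays faster than any geometric sequence, so B D^d = 0; symmetrically C A^d = 0.  Thus every
   term of the series vanishes and M^d = diag(A^d, D^d).  The residue M - M^2 M^d is
   [[a, B], [C, d]] with a, d quasinilpotent, a B = lam B d, d C = lam C a and B C = 0; its powers
   are explicit, with coefficients bounded by (1 + |lam|)^(2n), so it is quasinilpotent. *)

Definition subgeometric (u : nat -> R) : Prop :=
  forall e, e > 0 -> exists K N, 0 <= K /\ forall n, (n >= N)%nat -> u n <= K * e ^ n.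

Lemma subgeometric_plus u v :
  subgeometric u -> subgeometric v -> subgeometric (fun n => u n + v n).
Proof.
  intros Hu Hv e He.
  destruct (Hu e He) as [K1 [N1 [HK1 H1]]], (Hv e He) as [K2 [N2 [HK2 H2]]].
  exists (K1 + K2), (N1 + N2)%nat; split; [lra|]. intros n Hn.
  specialize (H1 n ltac:(lia)); specialize (H2 n ltac:(lia)); lra.
Qed.

Lemma subgeometric_le u w :
  subgeometric u -> (exists N, forall n, (n >= N)%nat -> w n <= u n) -> subgeometric w.
Proof.
  intros Hu [M Hw] e He. destruct (Hu e He) as [K [N [HK H]]].
  exists K, (N + M)%nat; split; [lra|]. intros n Hn.
  specialize (H n ltac:(lia)); specialize (Hw n ltac:(lia)); lra.
Qed.

Lemma subgeometric_shift u k : subgeometric u -> subgeometric (fun n => u (n - k)%nat).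
Proof.
  intros Hu e He. destruct (Hu e He) as [K [N [HK H]]].
  assert (Hek : 0 < e ^ k) by (apply pow_lt; lra).
  exists (K / e ^ k), (N + k)%nat; split.
  { apply Rmult_le_pos; [lra | left; apply Rinv_0_lt_compat; lra]. }
  intros n Hn. specialize (H (n - k)%nat ltac:(lia)).
  replace (K / e ^ k * e ^ n) with (K * e ^ (n - k)); [exact H|].
  replace n with (n - k + k)%nat at 2 by lia. rewrite pow_add. field; lra.
Qed.

Lemma subgeometric_scal c u : 0 <= c -> subgeometric u -> subgeometric (fun n => c * u n).
Proof.
  intros Hc Hu e He. destruct (Hu e He) as [K [N [HK H]]].
  exists (c * K), N; split; [nra|]. intros n Hn. specialize (H n Hn).
  rewrite Rmult_assoc. apply Rmult_le_compat_l; assumption.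
Qed.

(* Shrinking [e] by the factor [L + 1] absorbs the geometric weight [L ^ n]. *)
Lemma subgeometric_geom L u : 0 <= L -> subgeometric u -> subgeometric (fun n => L ^ n * u n).
Proof.
  intros HL Hu e He.
  destruct (Hu (e / (L + 1)) ltac:(apply Rdiv_lt_0_compat; lra)) as [K [N [HK H]]].
  exists K, N; split; [exact HK|]. intros n Hn. specialize (H n Hn).
  assert (HLn : 0 <= L ^ n) by (apply pow_le; lra).
  assert (HL1 : L ^ n <= (L + 1) ^ n) by (apply pow_incr; lra).
  assert (Hq : 0 <= (e / (L + 1)) ^ n) by (apply pow_le; apply Rlt_le, Rdiv_lt_0_compat; lra).
  assert (E : e ^ n = (L + 1) ^ n * (e / (L + 1)) ^ n).
  { rewrite <- Rpow_mult_distr. f_equal. field. lra. }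
  rewrite E.
  apply Rle_trans with (L ^ n * (K * (e / (L + 1)) ^ n)); [apply Rmult_le_compat_l; assumption|].
  assert (0 <= K * (e / (L + 1)) ^ n) by nra. nra.
Qed.

Lemma pow_half_eventually_lt y : 0 < y -> exists N, forall n, (n >= N)%nat -> (1/2) ^ n < y.
Proof.
  intro Hy. destruct (pow_lt_1_zero (1/2) ltac:(rewrite Rabs_right; lra) y Hy) as [N HN].
  exists N. intros n Hn. specialize (HN n Hn).
  rewrite Rabs_right in HN; [exact HN|]. apply Rle_ge, pow_le; lra.
Qed.

(* The constant [K] is absorbed by running the definition at [e / 2]. *)
Lemma subgeometric_pow_le u :
  subgeometric u -> forall e, e > 0 -> exists N, forall n, (n >= N)%nat -> u n <= e ^ n.
Proof.
  intros Hu e He. destruct (Hu (e / 2) ltac:(lra)) as [K [N [HK H]]].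
  destruct (pow_half_eventually_lt (/ (K + 1)) ltac:(apply Rinv_0_lt_compat; lra)) as [M HM].
  exists (N + M)%nat. intros n Hn. specialize (H n ltac:(lia)); specialize (HM n ltac:(lia)).
  assert (E : (e / 2) ^ n = e ^ n * (1 / 2) ^ n) by (rewrite <- Rpow_mult_distr; f_equal; field).
  rewrite E in H.
  assert (Hen : 0 < e ^ n) by (apply pow_lt; lra).
  assert (Hh : 0 <= (1 / 2) ^ n) by (apply pow_le; lra).
  assert (K * (1 / 2) ^ n <= 1).
  { apply Rle_trans with (K * / (K + 1)); [apply Rmult_le_compat_l; lra|].
    apply Rmult_le_reg_r with (K + 1); [lra|]. field_simplify; lra. }
  nra.
Qed.

Lemma subgeometric_const_le0 v : subgeometric (fun _ => v) -> v <= 0.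
Proof.
  intro Hv. destruct (Rle_lt_dec v 0) as [|Hpos]; [assumption|].
  destruct (subgeometric_pow_le _ Hv (1 / 2) ltac:(lra)) as [N HN].
  destruct (pow_half_eventually_lt v Hpos) as [M HM].
  specialize (HN (N + M)%nat ltac:(lia)); specialize (HM (N + M)%nat ltac:(lia)); lra.
Qed.

Lemma gquasinil_subgeometric {T : Type} (gone : T) (gmul : T -> T -> T) (gnorm : T -> R) y :
  gquasinil gone gmul gnorm y <-> subgeometric (fun n => gnorm (gpow gone gmul y n)).
Proof.
  split.
  - intros H e He. destruct (H e He) as [N HN].
    exists 1, N; split; [lra|]. intros n Hn. rewrite Rmult_1_l. exact (HN n Hn).
  - intros H e He. exact (subgeometric_pow_le _ H e He).
Qed.

Lemma Cmod_coquelicot c : Cmod c = Complex.Cmod c.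
Proof. unfold Cmod, Complex.Cmod. f_equal. ring. Qed.

Lemma Cmod_ge0 c : 0 <= Cmod c.
Proof. apply sqrt_pos. Qed.

Lemma Cmod_C0 : Cmod Defs.C0 = 0.
Proof. rewrite Cmod_coquelicot. exact Complex.Cmod_0. Qed.

Lemma Cmod_C1 : Cmod Defs.C1 = 1.
Proof. rewrite Cmod_coquelicot. exact Complex.Cmod_1. Qed.

Lemma Cmod_Cmul a b : Cmod (Cmul a b) = Cmod a * Cmod b.
Proof. rewrite !Cmod_coquelicot. exact (Complex.Cmod_mult a b). Qed.

Lemma Cmod_Cadd_le a b : Cmod (Cadd a b) <= Cmod a + Cmod b.
Proof. rewrite !Cmod_coquelicot. exact (Complex.Cmod_triangle a b). Qed.

Lemma Cmod_gt0 c : c <> Defs.C0 -> 0 < Cmod c.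
Proof. rewrite Cmod_coquelicot. apply Complex.Cmod_gt_0. Qed.

Definition Cpow (c : Cx) (n : nat) : Cx := gpow Defs.C1 Cmul c n.

Lemma Cmod_Cpow c n : Cmod (Cpow c n) = Cmod c ^ n.
Proof. induction n; simpl; [apply Cmod_C1 | rewrite Cmod_Cmul; f_equal; exact IHn]. Qed.

Lemma Cmul_comm a b : Cmul a b = Cmul b a.
Proof. unfold Cmul; f_equal; ring. Qed.

Set Implicit Arguments.
Unset Strict Implicit.

Section Algebra.
Variable X : CBanachAlgebra.
Implicit Types x y z a b : X.

Lemma add_0r x : add x zero = x.
Proof. rewrite add_comm; apply add_0l. Qed.

Lemma add_oppr x : add x (opp x) = zero.
Proof. rewrite add_comm; apply add_oppl. Qed.

Lemma add_eq_l_0 a b : a = add a b -> b = zero.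
Proof.
  intro H. apply (f_equal (add (opp a))) in H.
  rewrite add_assoc, add_oppl, add_0l in H. symmetry; exact H.
Qed.

Lemma opp_unique a b : add a b = zero -> b = opp a.
Proof.
  intro H. apply (f_equal (add (opp a))) in H.
  rewrite add_assoc, add_oppl, add_0l, add_0r in H. exact H.
Qed.

Lemma opp_0 : opp (@zero X) = zero.
Proof. symmetry. apply opp_unique, add_0l. Qed.

Lemma mul_0l x : mul zero x = zero.
Proof. apply (add_eq_l_0 (a := mul zero x)). rewrite <- mul_addl, add_0l. reflexivity. Qed.

Lemma mul_0r x : mul x zero = zero.
Proof. apply (add_eq_l_0 (a := mul x zero)). rewrite <- mul_addr, add_0l. reflexivity. Qed.

Lemma mul_oppl x y : mul (opp x) y = opp (mul x y).
Proof. apply opp_unique. rewrite <- mul_addl, add_oppr, mul_0l. reflexivity. Qed.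

Lemma mul_oppr x y : mul x (opp y) = opp (mul x y).
Proof. apply opp_unique. rewrite <- mul_addr, add_oppr, mul_0r. reflexivity. Qed.

Lemma scal_0r c : scal c (@zero X) = zero.
Proof. apply (add_eq_l_0 (a := scal c zero)). rewrite <- scal_addr, add_0l. reflexivity. Qed.

Lemma scal_0l x : scal Defs.C0 x = zero.
Proof.
  apply (add_eq_l_0 (a := scal Defs.C0 x)). rewrite <- scal_addl.
  f_equal. unfold Cadd, Defs.C0; simpl; f_equal; ring.
Qed.

Lemma scal_m1 x : scal (-1, 0) x = opp x.
Proof.
  apply opp_unique. rewrite <- (scal_1 X x) at 1. rewrite <- scal_addl.
  replace (Cadd Defs.C1 (-1, 0)) with Defs.C0
    by (unfold Cadd, Defs.C1, Defs.C0; simpl; f_equal; ring).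
  apply scal_0l.
Qed.

Lemma norm_0 : norm (@zero X) = 0.
Proof. rewrite <- (scal_0l zero), norm_scal, Cmod_C0. ring. Qed.

Lemma norm_opp x : norm (opp x) = norm x.
Proof.
  rewrite <- scal_m1, norm_scal. unfold Cmod; simpl.
  replace (-1 * -1 + 0 * 0) with 1 by ring. rewrite sqrt_1. ring.
Qed.

Lemma norm_ge0 x : 0 <= norm x.
Proof.
  pose proof (norm_triangle X x (opp x)) as H.
  rewrite add_oppr, norm_0, norm_opp in H. lra.
Qed.

Lemma norm_mul3_le x y z : norm (mul x (mul y z)) <= norm x * (norm y * norm z).
Proof.
  apply Rle_trans with (norm x * norm (mul y z)); [apply norm_mul|].
  apply Rmult_le_compat_l; [apply norm_ge0 | apply norm_mul].
Qed.

Lemma norm_scal_mul_le p x y K :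
  Cmod p <= K -> norm (scal p (mul x y)) <= K * (norm x * norm y).
Proof.
  intro H. rewrite norm_scal.
  apply Rmult_le_compat; [apply Cmod_ge0 | apply norm_ge0 | exact H | apply norm_mul].
Qed.

Lemma apow_S x n : apow X x (S n) = mul x (apow X x n).
Proof. reflexivity. Qed.

Lemma apow_mul_comm x n : mul (apow X x n) x = mul x (apow X x n).
Proof.
  induction n as [|n IH]; [apply (eq_trans (mul_1l X x)); symmetry; apply mul_1r|].
  rewrite apow_S, <- mul_assoc, IH. reflexivity.
Qed.

Lemma norm_apow_le x n : norm (apow X x (S n)) <= norm x ^ S n.
Proof.
  induction n as [|n IH].
  - rewrite apow_S; simpl. rewrite mul_1r. lra.
  - rewrite apow_S. apply Rle_trans with (norm x * norm (apow X x (S n))); [apply norm_mul|].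
    apply Rmult_le_compat_l; [apply norm_ge0 | exact IH].
Qed.

End Algebra.

Section Drazin.
Variable X : CBanachAlgebra.
Implicit Types x y z a b : X.

Lemma mul_spidem_0 a ad : ad = mul (mul ad a) ad -> mul ad (spidem X a ad) = zero.
Proof.
  intro Hi. unfold spidem, sub.
  rewrite mul_addr, mul_1r, mul_oppr, mul_assoc, <- Hi. apply add_oppr.
Qed.

Lemma spidem_mul_id a ad b : mul ad b = zero -> mul (spidem X a ad) b = b.
Proof.
  intro H. unfold spidem, sub.
  rewrite mul_addl, mul_1l, mul_oppl, <- mul_assoc, H, mul_0r, opp_0. apply add_0r.
Qed.

Lemma apow_inner_inverse d dd :
  mul dd d = mul d dd -> dd = mul (mul dd d) dd ->
  forall k, dd = mul (apow X d k) (apow X dd (S k)).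
Proof.
  intros Hc Hi.
  assert (Hstep : forall k, apow X dd (S k) = mul d (apow X dd (S (S k)))).
  { intro k. rewrite (apow_S dd (S k)), apow_S, mul_assoc, mul_assoc, <- Hc, <- Hi. reflexivity. }
  induction k as [|k IH].
  - simpl. rewrite mul_1l, mul_1r. reflexivity.
  - rewrite IH at 1. rewrite Hstep, mul_assoc, apow_mul_comm. reflexivity.
Qed.

Lemma intertwine_apow lam a b d :
  mul a b = scal lam (mul b d) ->
  forall k, mul (apow X a k) b = scal (Cpow lam k) (mul b (apow X d k)).
Proof.
  intros H k. induction k as [|k IH].
  - simpl. rewrite mul_1l, mul_1r, scal_1. reflexivity.
  - rewrite !apow_S, <- mul_assoc, IH, scal_mulr, mul_assoc, H, scal_mull, <- scal_mul.
    rewrite <- mul_assoc, Cmul_comm. reflexivity.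
Qed.

(* [lam ^ k (b dd) = a ^ k b dd ^ (k + 1)]: the right side is subgeometric in [k], while
   [|lam| ^ k] is geometric with [|lam| > 0]. *)
Lemma quasinil_intertwine_mul_0 lam a b d dd :
  lam <> Defs.C0 -> gquasinil one mul norm a -> mul a b = scal lam (mul b d) ->
  mul dd d = mul d dd -> dd = mul (mul dd d) dd -> mul b dd = zero.
Proof.
  intros Hlam Qa Hab Hc Hi. apply norm_eq0.
  set (r := Cmod lam). assert (Hr : 0 < r) by (apply Cmod_gt0; exact Hlam).
  assert (Hbound : forall k, norm (mul b dd)
            <= (norm b * norm dd) * ((norm dd / r) ^ k * norm (apow X a k))).
  { intro k.
    assert (E : scal (Cpow lam k) (mul b dd) = mul (mul (apow X a k) b) (apow X dd (S k))).
    { rewrite (intertwine_apow Hab), scal_mull, <- mul_assoc, <- (apow_inner_inverse Hc Hi k).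
      reflexivity. }
    assert (Hle : r ^ k * norm (mul b dd) <= norm (apow X a k) * norm b * norm dd ^ S k).
    { unfold r. rewrite <- Cmod_Cpow, <- norm_scal, E.
      apply Rle_trans with (norm (mul (apow X a k) b) * norm (apow X dd (S k))); [apply norm_mul|].
      apply Rmult_le_compat; try apply norm_ge0; [apply norm_mul | apply norm_apow_le]. }
    assert (Hrk : 0 < r ^ k) by (apply pow_lt; lra).
    apply Rmult_le_reg_l with (r ^ k); [exact Hrk|].
    replace (r ^ k * (norm b * norm dd * ((norm dd / r) ^ k * norm (apow X a k))))
      with (norm (apow X a k) * norm b * norm dd ^ S k)
      by (unfold Rdiv; rewrite Rpow_mult_distr, pow_inv; simpl; field; apply pow_nonzero; lra).
    exact Hle. }
  apply Rle_antisym; [|apply norm_ge0].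
  apply subgeometric_const_le0, subgeometric_le with
    (u := fun k => (norm b * norm dd) * ((norm dd / r) ^ k * norm (apow X a k))).
  - apply subgeometric_scal; [apply Rmult_le_pos; apply norm_ge0|].
    apply subgeometric_geom.
    + apply Rmult_le_pos; [apply norm_ge0 | left; apply Rinv_0_lt_compat; exact Hr].
    + apply gquasinil_subgeometric, Qa.
  - exists 0%nat. intros k _. apply Hbound.
Qed.

Definition qnil_part x xd : X := sub X x (mul (mul x x) xd).

Lemma qnil_part_mul x xd b : mul xd b = zero -> mul (qnil_part x xd) b = mul x b.
Proof.
  intro H. unfold qnil_part, sub.
  rewrite mul_addl, mul_oppl, <- mul_assoc, H, mul_0r, opp_0. apply add_0r.
Qed.

Lemma mul_qnil_part b x xd :
  mul xd x = mul x xd -> mul b xd = zero -> mul b (qnil_part x xd) = mul b x.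
Proof.
  intros Hc H. unfold qnil_part, sub.
  assert (E : mul (mul x x) xd = mul xd (mul x x)).
  { rewrite <- mul_assoc, <- Hc, !mul_assoc, Hc. reflexivity. }
  rewrite E, mul_addr, mul_oppr, mul_assoc, H, mul_0l, opp_0. apply add_0r.
Qed.

Section Corner.
Variables (lam : Cx) (a ad b d dd : X).
Hypotheses (Hlam : lam <> Defs.C0) (Ha : is_gdrazin X a ad)
  (Hdc : mul dd d = mul d dd) (Hdi : dd = mul (mul dd d) dd)
  (Hab : mul a b = scal lam (mul (mul (spidem X a ad) b) d)).

Lemma gdrazin_inv_mul_0 : mul ad b = zero.
Proof.
  destruct Ha as [Hc [Hi _]].
  assert (H : mul ad (mul a b) = zero).
  { rewrite Hab, scal_mulr, !mul_assoc, mul_spidem_0, !mul_0l by exact Hi. apply scal_0r. }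
  rewrite Hi, <- (mul_assoc _ ad a ad), <- Hc, <- !mul_assoc, H. apply mul_0r.
Qed.

Lemma corner_conditions :
  mul ad b = zero /\ mul b dd = zero /\
  mul (qnil_part a ad) b = scal lam (mul b (qnil_part d dd)).
Proof.
  pose proof gdrazin_inv_mul_0 as H0.
  assert (Hint : mul (qnil_part a ad) b = scal lam (mul b d)).
  { rewrite qnil_part_mul, Hab, spidem_mul_id by exact H0. reflexivity. }
  destruct Ha as [_ [_ Q]].
  assert (H1 : mul b dd = zero) by exact (quasinil_intertwine_mul_0 Hlam Q Hint Hdc Hdi).
  repeat split; try assumption.
  rewrite mul_qnil_part by assumption. exact Hint.
Qed.

End Corner.
End Drazin.

Fixpoint offdiag_coef (lam : Cx) (n : nat) : Cx :=
  match n with O => Defs.C1 | S k => Cadd (Cmul (offdiag_coef lam k) lam) Defs.C1 end.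

Fixpoint corner_coef (lam : Cx) (n : nat) : Cx :=
  match n with
  | O => Defs.C0
  | S k => Cadd (offdiag_coef lam k) (Cmul (corner_coef lam k) (Cmul lam lam))
  end.

Lemma Cmod_coef_le lam n :
  Cmod (offdiag_coef lam n) <= ((Cmod lam + 1) ^ 2) ^ n /\
  Cmod (corner_coef lam n) <= ((Cmod lam + 1) ^ 2) ^ n.
Proof.
  set (r := Cmod lam). assert (Hr : 0 <= r) by apply Cmod_ge0.
  set (L := (r + 1) ^ 2).
  assert (HLr : r + 1 <= L) by (unfold L; nra).
  assert (HLr2 : 1 + r * r <= L) by (unfold L; nra).
  induction n as [|n [IHp IHq]]; cbn [offdiag_coef corner_coef].
  - rewrite Cmod_C1, Cmod_C0. simpl. lra.
  - assert (HLn : 1 <= L ^ n) by (apply pow_R1_Rle; lra).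
    pose proof (Cmod_ge0 (offdiag_coef lam n)). pose proof (Cmod_ge0 (corner_coef lam n)).
    rewrite <- tech_pow_Rmult. split.
    + eapply Rle_trans; [apply Cmod_Cadd_le|]. rewrite Cmod_Cmul, Cmod_C1. fold r. nra.
    + eapply Rle_trans; [apply Cmod_Cadd_le|]. rewrite !Cmod_Cmul. fold r. nra.
Qed.

Section Matrix.
Variable X : CBanachAlgebra.
Variables (lam : Cx) (a b c d : X).
Hypotheses (Hab : mul a b = scal lam (mul b d)) (Hdc : mul d c = scal lam (mul c a))
  (Hbc : mul b c = zero).

(* For [n = 0] the [c b] term carries the coefficient [corner_coef lam 0 = 0]. *)
Lemma M2pow_intertwined n :
  M2pow X (mk2 a b c d) (S n) =
  mk2 (apow X a (S n)) (scal (offdiag_coef lam n) (mul b (apow X d n)))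
      (scal (offdiag_coef lam n) (mul c (apow X a n)))
      (add (apow X d (S n)) (scal (corner_coef lam n) (mul c (mul b (apow X d (pred n)))))).
Proof.
  induction n as [|n IH].
  - unfold M2pow, apow; cbn [gpow offdiag_coef corner_coef pred].
    unfold M2mul, M2one; cbn [m11 m12 m21 m22].
    rewrite !mul_0r, !add_0r, !add_0l, !scal_1, scal_0l, !mul_1r, add_0r. reflexivity.
  - change (M2pow X (mk2 a b c d) (S (S n)))
      with (M2mul X (mk2 a b c d) (M2pow X (mk2 a b c d) (S n))).
    rewrite IH. unfold M2mul. cbn [m11 m12 m21 m22]. f_equal.
    + rewrite scal_mulr, mul_assoc, Hbc, mul_0l, scal_0r. apply add_0r.
    + rewrite scal_mulr, mul_assoc, Hab, scal_mull, <- scal_mul, mul_addr, scal_mulr,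
        (mul_assoc _ b c), Hbc, mul_0l, scal_0r, add_0r.
      cbn [offdiag_coef]. rewrite scal_addl, scal_1, <- mul_assoc. reflexivity.
    + rewrite scal_mulr, mul_assoc, Hdc, scal_mull, <- scal_mul.
      cbn [offdiag_coef]. rewrite scal_addl, scal_1, add_comm, <- mul_assoc. reflexivity.
    + rewrite scal_mulr, mul_addr, scal_mulr, <- (apow_S d (S n)).
      destruct n as [|m].
      * cbn [corner_coef]. rewrite scal_0l, add_0r.
        replace (Cadd (offdiag_coef lam 0) (Cmul Defs.C0 (Cmul lam lam))) with (offdiag_coef lam 0)
          by (cbn; unfold Cadd, Cmul, Defs.C0, Defs.C1; simpl; f_equal; ring).
        apply add_comm.
      * assert (E : mul d (mul c (mul b (apow X d (pred (S m))))) =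
                    scal (Cmul lam lam) (mul c (mul b (apow X d (S m))))).
        { cbn [pred]. rewrite mul_assoc, Hdc, scal_mull, <- mul_assoc, (mul_assoc _ a b), Hab,
            scal_mull, scal_mulr, <- scal_mul, apow_S, <- (mul_assoc _ b d). reflexivity. }
        cbn [corner_coef]. rewrite E, <- scal_mul, scal_addl, add_assoc,
          (add_comm _ (scal (offdiag_coef lam (S m)) _) (apow X d (S (S (S m))))), <- add_assoc.
        reflexivity.
Qed.

Lemma M2norm_pow_le n :
  M2norm X (M2pow X (mk2 a b c d) (S n)) <=
  norm (apow X a (S n)) + norm (apow X d (S n)) +
  ((Cmod lam + 1) ^ 2) ^ n *
    (norm b * norm (apow X d n) + norm c * norm (apow X a n) +
     norm c * norm b * norm (apow X d (pred n))).
Proof.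
  destruct (Cmod_coef_le lam n) as [Hp Hq].
  rewrite M2pow_intertwined. unfold M2norm; cbn [m11 m12 m21 m22].
  pose proof (norm_scal_mul_le b (apow X d n) Hp) as H12.
  pose proof (norm_scal_mul_le c (apow X a n) Hp) as H21.
  pose proof (norm_triangle X (apow X d (S n))
                (scal (corner_coef lam n) (mul c (mul b (apow X d (pred n)))))) as H22.
  assert (Hcb : Cmod (corner_coef lam n) * norm (mul c (mul b (apow X d (pred n)))) <=
                ((Cmod lam + 1) ^ 2) ^ n * (norm c * norm b * norm (apow X d (pred n)))).
  { rewrite Rmult_assoc. apply Rmult_le_compat; [apply Cmod_ge0 | apply norm_ge0 | exact Hq |].
    apply norm_mul3_le. }
  rewrite norm_scal in H22. lra.
Qed.

Lemma M2_quasinil_intertwined :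
  gquasinil one mul norm a -> gquasinil one mul norm d ->
  gquasinil (M2one X) (M2mul X) (M2norm X) (mk2 a b c d).
Proof.
  intros Qa Qd. apply gquasinil_subgeometric in Qa, Qd. apply gquasinil_subgeometric.
  set (L := (Cmod lam + 1) ^ 2).
  assert (HL : 1 <= L) by (unfold L; pose proof (Cmod_ge0 lam); nra).
  apply subgeometric_le with (u := fun m =>
    norm (apow X a m) + norm (apow X d m) +
    L ^ m * (norm b * norm (apow X d (m - 1)) + norm c * norm (apow X a (m - 1)) +
             norm c * norm b * norm (apow X d (m - 2)))).
  - pose proof (subgeometric_shift _ 1%nat Qa) as Qa1.
    pose proof (subgeometric_shift _ 1%nat Qd) as Qd1.
    pose proof (subgeometric_shift _ 2%nat Qd) as Qd2.
    apply subgeometric_plus; [apply subgeometric_plus; assumption|].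
    apply subgeometric_geom; [lra|].
    apply subgeometric_plus; [apply subgeometric_plus|]; apply subgeometric_scal;
      try apply Rmult_le_pos; try apply norm_ge0; assumption.
  - exists 1%nat. intros [|n] Hn; [lia|].
    change (gpow (M2one X) (M2mul X) (mk2 a b c d) (S n)) with (M2pow X (mk2 a b c d) (S n)).
    eapply Rle_trans; [apply M2norm_pow_le|]. fold L.
    replace (S n - 1)%nat with n by lia. replace (S n - 2)%nat with (pred n) by lia.
    apply Rplus_le_compat_l, Rmult_le_compat_r.
    + repeat apply Rplus_le_le_0_compat; repeat apply Rmult_le_pos; apply norm_ge0.
    + rewrite <- tech_pow_Rmult. pose proof (pow_R1_Rle L n HL). nra.
Qed.

End Matrix.

Section Block.
Variable X : CBanachAlgebra.

Lemma M2add_0r (M : M2 X) : M2add X M (M2zero X) = M.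
Proof. destruct M; unfold M2add, M2zero; cbn. rewrite !add_0r. reflexivity. Qed.

Lemma M2series_sum_0 (f : nat -> M2 X) :
  (forall n, f n = M2zero X) -> M2series_sum X f (M2zero X).
Proof.
  intros Hf e He. exists 0%nat. intros n _.
  assert (Hs : gpsum (M2add X) f n = M2zero X).
  { induction n as [|n IH]; cbn [gpsum]; rewrite ?IH, Hf, ?M2add_0r; reflexivity. }
  rewrite Hs. unfold M2add, M2opp, M2zero, M2norm; cbn. rewrite opp_0, add_0r, norm_0. lra.
Qed.

Lemma M2_gdrazin_diag (A B C D Ad Dd : X) :
  is_gdrazin X A Ad -> is_gdrazin X D Dd ->
  mul Ad B = zero -> mul B Dd = zero -> mul Dd C = zero -> mul C Ad = zero -> mul B C = zero ->
  gquasinil (M2one X) (M2mul X) (M2norm X) (mk2 (qnil_part A Ad) B C (qnil_part D Dd)) ->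
  M2is_gdrazin X (mk2 A B C D) (mk2 Ad zero zero Dd).
Proof.
  intros [HcA [HiA _]] [HcD [HiD _]] HAdB HBDd HDdC HCAd HBC HQ.
  split; [|split].
  - unfold M2mul; cbn [m11 m12 m21 m22].
    rewrite !mul_0l, !mul_0r, !add_0l, !add_0r, HAdB, HBDd, HDdC, HCAd, HcA, HcD. reflexivity.
  - unfold M2mul; cbn [m11 m12 m21 m22].
    rewrite !mul_0l, !mul_0r, !add_0l, !add_0r, HAdB, HDdC, !mul_0l, <- HiA, <- HiD.
    reflexivity.
  - replace (M2add X _ _) with (mk2 (qnil_part A Ad) B C (qnil_part D Dd)); [exact HQ|].
    unfold M2add, M2opp, M2mul, qnil_part, sub; cbn [m11 m12 m21 m22].
    rewrite ?mul_0l, ?mul_0r, ?add_0l, ?add_0r, HBC, ?add_0r. f_equal.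
    + rewrite mul_addl, <- (mul_assoc _ A B Dd), HBDd, mul_0r, add_0l,
        <- (mul_assoc _ B D Dd), <- HcD, mul_assoc, HBDd, mul_0l, opp_0, add_0r.
      reflexivity.
    + rewrite mul_addl, <- (mul_assoc _ D C Ad), HCAd, mul_0r, add_0r,
        <- (mul_assoc _ C A Ad), <- HcA, mul_assoc, HCAd, mul_0l, opp_0, add_0r.
      reflexivity.
    + rewrite mul_addl, <- (mul_assoc _ C B Dd), HBDd, mul_0r, add_0l. reflexivity.
Qed.

End Block.

Theorem theorem4p3 (Alg : CBanachAlgebra) (lam : Cx) (A B C D Ad Dd : Alg) :
  lam <> C0 ->
  is_gdrazin Alg A Ad -> is_gdrazin Alg D Dd ->
  mul A B = scal lam (mul (mul (spidem Alg A Ad) B) D) ->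
  mul D C = scal lam (mul (mul (spidem Alg D Dd) C) A) ->
  mul B C = zero ->
  exists S : M2 Alg,
    M2series_sum Alg
      (fun n => M2mul Alg (M2pow Alg (mk2 A B C D) n)
                  (mk2 zero (mul B (apow Alg Dd (n + 2)))
                       (mul C (apow Alg Ad (n + 2))) zero)) S /\
    M2is_gdrazin Alg (mk2 A B C D) (M2add Alg (mk2 Ad zero zero Dd) S).
Proof.
  intros Hlam HA HD HAB HDC HBC.
  pose proof HA as [HcA [HiA QA]]. pose proof HD as [HcD [HiD QD]].
  destruct (corner_conditions Hlam HA HcD HiD HAB) as [HAdB [HBDd HintB]].
  destruct (corner_conditions Hlam HD HcA HiA HDC) as [HDdC [HCAd HintC]].
  exists (M2zero Alg). split.
  - apply M2series_sum_0. intro n.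
    replace (n + 2)%nat with (S (S n)) by lia.
    rewrite !apow_S, (mul_assoc _ B Dd), (mul_assoc _ C Ad), HBDd, HCAd, !mul_0l.
    unfold M2mul, M2zero; cbn [m11 m12 m21 m22]. rewrite !mul_0r, !add_0r. reflexivity.
  - rewrite M2add_0r.
    apply M2_gdrazin_diag; try assumption.
    exact (M2_quasinil_intertwined HintB HintC HBC QA QD).
Qed.
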